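(* Let $R\subset S$ be an FCP ring extension which is a $\mathcal P$-extension, with Loewy series $\{S_i\}_{i=0}^n$. Then $R\subset S$ is distributive if and only if $S_i\subset S_{i+1}$ is Boolean for each $0\leq i\leq n-1$. If these conditions hold, then $R\subset S$ has FIP.
   Context: All rings are commutative with identity. $[R,S]$ is the lattice of $R$-subalgebras of $S$ (meet = intersection, join = product). FCP: every chain in $[R,S]$ is finite; FIP: $[R,S]$ is finite. $T\subset U$ minimal means $[T,U]=\{T,U\}$; atoms of $[R,S]$ are $T$ with $R\subset T$ minimal; the socle $\mathcal S[R,S]$ is the product of all atoms. Loewy series: $S_0=R$, $S_{i+1}=\mathcal S[S_i,S]$ while $S_i\neq S$, $n$ least with $S_n=S$. An FCP extension with Loewy series $\{S_i\}_{i=0}^n$ is a $\mathcal P$-extension if $[R,S]=\bigcup_{i=0}^{n-1}[S_i,S_{i+1}]$. Distributive: $[R,S]$ is a distributive lattice; Boolean: distributive and every element has a complement ($T\cap T'=R$, $TT'=S$). *)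

From mathcomp Require Import all_boot all_algebra.
From mathcomp Require Import boolp classical_sets cardinality.
Set Implicit Arguments. Unset Strict Implicit. Unset Printing Implicit Defensive.
Import GRing.Theory.
Local Open Scope ring_scope.
Local Open Scope classical_set_scope.

(* A ring extension R ⊆ S is modelled by an ambient commutative ring S (a type)
   and a subring R : set S.  Intermediate rings are subsets T of S. *)
Section RingExt.
Variable S : comPzRingType.

Definition subring (T : set S) : Prop :=
  T 1 /\ (forall x y, T x -> T y -> T (x - y)) /\
  (forall x y, T x -> T y -> T (x * y)).

Definition interm (A B T : set S) : Prop :=
  subring T /\ A `<=` T /\ T `<=` B.

Definition interval (A B : set S) : set (set S) := [set T | interm A B T].

Definition gen (X : set S) : set S :=
  fun x => forall T, subring T -> X `<=` T -> T x.

Definition prod (T U : set S) : set S := gen (T `|` U).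

Definition minimal (T U : set S) : Prop :=
  T `<=` U /\ T <> U /\ forall V, interm T U V -> V = T \/ V = U.

Definition atom (A B T : set S) : Prop := interm A B T /\ minimal A T.

Definition socle (A B : set S) : set S :=
  gen (A `|` [set x | exists T, atom A B T /\ T x]).

Fixpoint loewy (R : set S) (i : nat) : set S :=
  match i with
  | 0 => R
  | i'.+1 => socle (loewy R i') setT
  end.

Definition chain (C : set (set S)) : Prop :=
  forall T U, C T -> C U -> T `<=` U \/ U `<=` T.

Definition FCP (A B : set S) : Prop :=
  forall C : set (set S), C `<=` interval A B -> chain C -> finite_set C.

Definition FIP (A B : set S) : Prop := finite_set (interval A B).

Definition loewy_length (R : set S) (n : nat) : Prop :=
  loewy R n = setT /\ forall m, (m < n)%N -> loewy R m <> setT.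

Definition P_extension (R : set S) (n : nat) : Prop :=
  forall T, interm R setT T ->
    exists2 i, (i < n)%N & interm (loewy R i) (loewy R i.+1) T.

(* distributive lattice [A,B] (meet = intersection, join = product) *)
Definition distributive (A B : set S) : Prop :=
  forall T U V, interm A B T -> interm A B U -> interm A B V ->
    T `&` prod U V = prod (T `&` U) (T `&` V) /\
    prod T (U `&` V) = prod T U `&` prod T V.

Definition boolean (A B : set S) : Prop :=
  distributive A B /\
  forall T, interm A B T ->
    exists T', interm A B T' /\ T `&` T' = A /\ prod T T' = B.

End RingExt.

From Pilot Require Import Defs.
From mathcomp Require Import all_boot all_algebra.
From mathcomp Require Import boolp classical_sets cardinality.
Set Implicit Arguments. Unset Strict Implicit. Unset Printing Implicit Defensive.
Local Open Scope classical_set_scope.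

#[local] Arguments prod {S} T U.

(* If [R,S] is distributive then so is every [S_i,S], and meeting an element
   T with a join of atoms keeps exactly the atoms below T.  Atoms are pairwise
   incomparable, so the joins of the first k atoms of an infinite family of
   atoms would form a strictly increasing chain; FCP therefore leaves finitely
   many atoms.  Every T in [S_i,S_{i+1}] is then the join of the atoms below
   it, the join of the other atoms is its complement, and the block has at
   most 2^k elements.  Conversely, in a P-extension elements of different
   blocks are comparable, and the distributive laws hold for every triple in
   which such comparabilities occur; triples inside one block are handled by
   the Boolean block.  FIP follows because [R,S] is the finite union of the
   finite blocks. *)

Section SubringLattice.
Variable S : comPzRingType.
Implicit Types A B T U V X : set S.

Lemma subringT : subring [set: S].
Proof. by split; [|split]. Qed.

Lemma subringI T U : subring T -> subring U -> subring (T `&` U).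
Proof.
move=> [T1 [TB TM]] [U1 [UB UM]]; split; [by []|split].
- by move=> x y [? ?] [? ?]; split; [apply: TB|apply: UB].
- by move=> x y [? ?] [? ?]; split; [apply: TM|apply: UM].
Qed.

Lemma gen_subring X : subring (gen X).
Proof.
split; [|split].
- by move=> T [].
- by move=> x y Xx Xy T sT XT; apply: sT.2.1; [apply: Xx|apply: Xy].
- by move=> x y Xx Xy T sT XT; apply: sT.2.2; [apply: Xx|apply: Xy].
Qed.

Lemma sub_gen X : X `<=` gen X.
Proof. by move=> x Xx T _; apply. Qed.

Lemma gen_sub X T : subring T -> X `<=` T -> gen X `<=` T.
Proof. by move=> sT XT x; apply. Qed.

Lemma prod_subring T U : subring (prod T U).
Proof. exact: gen_subring. Qed.

Lemma subset_prodl T U : T `<=` prod T U.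
Proof. by move=> x Tx; apply: sub_gen; left. Qed.

Lemma subset_prodr T U : U `<=` prod T U.
Proof. by move=> x Ux; apply: sub_gen; right. Qed.

Lemma prod_sub T U V : subring V -> T `<=` V -> U `<=` V -> prod T U `<=` V.
Proof. by move=> sV TV UV; apply: gen_sub => // x [/TV|/UV]. Qed.

Lemma prodC T U : prod T U = prod U T.
Proof. by rewrite /prod setUC. Qed.

Lemma prodS T U V : U `<=` V -> prod T U `<=` prod T V.
Proof.
move=> UV; apply: prod_sub; [exact: prod_subring|exact: subset_prodl|].
by move=> x /UV; apply: subset_prodr.
Qed.

Lemma prod_idr T U : subring U -> T `<=` U -> prod T U = U.
Proof. by move=> sU TU; apply/seteqP; split; [apply: prod_sub|apply: subset_prodr]. Qed.

Lemma prod_idl T U : subring T -> U `<=` T -> prod T U = T.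
Proof. by move=> sT UT; rewrite prodC prod_idr. Qed.

Definition distr_laws T U V : Prop :=
  T `&` prod U V = prod (T `&` U) (T `&` V) /\
  prod T (U `&` V) = prod T U `&` prod T V.

Lemma distr_lawsC T U V : distr_laws T U V -> distr_laws T V U.
Proof.
by move=> [E1 E2]; split; [rewrite prodC E1 prodC|rewrite setIC E2 setIC].
Qed.

Lemma distr_laws_chain T U V : subring T -> subring V -> U `<=` V ->
  distr_laws T U V.
Proof.
move=> sT sV UV; have TUV : T `&` U `<=` T `&` V by move=> x [Tx /UV].
split; first by rewrite !prod_idr //; exact: subringI.
by rewrite (setIidl UV) setIidl //; apply: prodS.
Qed.

Lemma distr_laws_below T U V : subring T -> subring U -> subring V ->
  T `<=` U -> T `<=` V -> distr_laws T U V.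
Proof.
move=> sT sU sV TU TV.
have TUV : T `<=` U `&` V by move=> x Tx; split; [apply: TU|apply: TV].
have TprodUV : T `<=` prod U V by move=> x /TU; apply: subset_prodl.
split; first by rewrite (setIidl TU) (setIidl TV) (setIidl TprodUV) prod_idl.
by rewrite !prod_idr //; exact: subringI.
Qed.

Lemma distr_laws_above T U V : subring T -> U `<=` T -> V `<=` T ->
  distr_laws T U V.
Proof.
move=> sT UT VT; have UVT : U `&` V `<=` T by move=> x [/UT].
split; first by rewrite (setIidr UT) (setIidr VT) setIidr //; apply: prod_sub.
by rewrite !prod_idl // setIid.
Qed.

Lemma interm_subinterval A B A' B' T : A `<=` A' -> B' `<=` B ->
  interm A' B' T -> interm A B T.
Proof.
move=> AA' B'B [sT [A'T TB']]; split; [|split] => // x.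
  by move/AA'/A'T.
by move/TB'/B'B.
Qed.

Lemma distributive_subinterval A B A' B' : A `<=` A' -> B' `<=` B ->
  distributive A B -> distributive A' B'.
Proof.
by move=> AA' B'B distrAB T U V /(interm_subinterval AA' B'B) iT
  /(interm_subinterval AA' B'B) iU /(interm_subinterval AA' B'B); apply: distrAB.
Qed.

Lemma FCP_subinterval A B A' B' : A `<=` A' -> B' `<=` B ->
  FCP A B -> FCP A' B'.
Proof. by move=> AA' B'B fcp C CI; apply: fcp => T /CI; apply: interm_subinterval. Qed.

Lemma FCP_ascending_chain_eq A B (J : nat -> set S) : FCP A B ->
  (forall k, interm A B (J k)) -> (forall k, J k `<=` J k.+1) ->
  exists k, J k.+1 = J k.
Proof.
move=> fcp iJ Jinc; apply: contrapT => /forallNP Jneq.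
have Jmono m k : (m <= k)%N -> J m `<=` J k.
  by move=> /subnK <-; elim: (k - m)%N => [|d IH] // x /IH; exact: Jinc.
have Jlt m k : (m < k)%N -> J m <> J k.
  move=> mk Emk; apply: (Jneq m); apply/seteqP; split; last exact: Jinc.
  by rewrite Emk; apply: Jmono.
have : finite_set (range J).
  apply: fcp; first by move=> _ [k _ <-]; apply: iJ.
  move=> _ _ [m _ <-] [k _ <-].
  by case: (leqP m k) => mk; [left|right]; apply: Jmono => //; apply: ltnW.
apply/infiniteP/pcard_leP/injfunPex; exists J => // m k _ _ Emk.
by case: (ltngtP m k) => // [/Jlt/(_ Emk)|/Jlt/(_ (esym Emk))].
Qed.

Lemma setI_atom A B T a : interm A B T -> atom A B a -> ~ a `<=` T ->
  T `&` a = A.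
Proof.
move=> [sT [AT _]] [[sa _] [Aa [_ min_a]]] aT.
have : interm A a (T `&` a).
  by split; [exact: subringI|split=> [x Ax|x []//]; split; [apply: AT|apply: Aa]].
by case/min_a => // Ea; case: aT; rewrite -Ea => x [].
Qed.

Lemma atom_sub_eq A B a b : atom A B a -> atom A B b -> a `<=` b -> a = b.
Proof.
move=> [[sa [Aa _]] [_ [Ana _]]] [_ [_ [_ min_b]]] ab.
by have [Ea|] := min_b a (conj sa (conj Aa ab)); first by case: Ana.
Qed.

End SubringLattice.

Section Atoms.
Variable S : comPzRingType.
Variables A B : set S.
Hypotheses (sA : subring A) (sB : subring B) (AB : A `<=` B).
Hypotheses (distrAB : distributive A B) (fcpAB : FCP A B).
Implicit Types T Z : set S.

Lemma big_prod_subring (I : Type) (r : seq I) (P : pred I) (F : I -> set S) :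
  subring (\big[prod/A]_(i <- r | P i) F i).
Proof. by apply: big_rec => // i X _ _; apply: prod_subring. Qed.

Lemma sub_big_prod_idx (I : Type) (r : seq I) (P : pred I) (F : I -> set S) :
  A `<=` \big[prod/A]_(i <- r | P i) F i.
Proof. by apply: big_rec => // i X _ AX x /AX; apply: subset_prodr. Qed.

Lemma sub_big_prod (I : eqType) (r : seq I) (P : pred I) (F : I -> set S) i :
  i \in r -> P i -> F i `<=` \big[prod/A]_(j <- r | P j) F j.
Proof.
elim: r => // j r IH; rewrite inE big_cons => /orP[/eqP<- ->|/IH{}IH Pi].
  exact: subset_prodl.
case: (P j); last exact: IH Pi.
by move=> x /(IH Pi); apply: subset_prodr.
Qed.

Lemma big_prod_sub (I : eqType) (r : seq I) (P : pred I) (F : I -> set S) Z :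
  subring Z -> A `<=` Z -> (forall i, i \in r -> P i -> F i `<=` Z) ->
  \big[prod/A]_(i <- r | P i) F i `<=` Z.
Proof.
move=> sZ AZ FZ; rewrite big_seq_cond.
apply: (big_rec (fun X => X `<=` Z)) => // i X /andP[ir Pi] XZ.
by apply: prod_sub => //; apply: FZ.
Qed.

Lemma interm_big_prod (I : eqType) (r : seq I) (P : pred I) (F : I -> set S) :
  (forall i, i \in r -> P i -> interm A B (F i)) ->
  interm A B (\big[prod/A]_(i <- r | P i) F i).
Proof.
move=> iF; split; first exact: big_prod_subring.
split; first exact: sub_big_prod_idx.
by apply: big_prod_sub => // i ir Pi; have [_ []] := iF i ir Pi.
Qed.

Lemma setI_big_prod (I : eqType) (r : seq I) (P : pred I) (F : I -> set S) T :
  {in r, forall i, atom A B (F i)} -> interm A B T ->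
  T `&` \big[prod/A]_(i <- r | P i) F i =
  \big[prod/A]_(i <- r | P i && `[< F i `<=` T >]) F i.
Proof.
move=> atomF iT; elim: r atomF => [|j r IH] atomF.
  by rewrite !big_nil setIidr //; have [_ []] := iT.
have atomFj : atom A B (F j) by apply: atomF; rewrite mem_head.
have [iFj _] := atomFj.
have atom_r : {in r, forall i, atom A B (F i)}.
  by move=> i ir; apply: atomF; rewrite inE ir orbT.
have {}IH := IH atom_r.
rewrite !big_cons; case: (P j) => /=; last exact: IH.
set X := \big[prod/A]_(i <- r | P i) F i.
have iX : interm A B X.
  by apply: interm_big_prod => i ir _; have [] := atom_r i ir.
have [-> _] := distrAB iT iFj iX; rewrite IH.
case: asboolP => [FjT|FjT]; first by rewrite setIidr.
rewrite (setI_atom iT atomFj FjT) prod_idr //.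
  exact: big_prod_subring.
exact: sub_big_prod_idx.
Qed.

Lemma finite_atoms : finite_set [set a | atom A B a].
Proof.
apply: contrapT => /infiniteP /pcard_leP /injfunPex [f atom_f f_inj].
have {}atom_f k : atom A B (f k) by apply: atom_f.
pose J k := \big[prod/A]_(i <- iota 0 k) f i.
have iJ k : interm A B (J k) by apply: interm_big_prod => i _ _; have [] := atom_f i.
have fJ k : f k `&` J k = A.
  rewrite /J setI_big_prod //; last by have [] := atom_f k.
  apply: big_hasC; apply/hasPn => i; rewrite mem_iota /= => ik.
  apply/asboolPn => /(atom_sub_eq (atom_f i) (atom_f k)) /f_inj.
  by move=> /(_ (in_setT _) (in_setT _)) Eik; rewrite Eik ltnn in ik.
have Jinc k : J k `<=` J k.+1.
  apply: big_prod_sub => [||i]; [exact: big_prod_subring|exact: sub_big_prod_idx|].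
  rewrite mem_iota => /andP[_ ik] _; apply: sub_big_prod => //.
  by rewrite mem_iota /= ltnS ltnW.
have [k Jk] := FCP_ascending_chain_eq fcpAB iJ Jinc.
have [_ [_ [Afk _]]] := atom_f k.
apply: Afk; rewrite -(fJ k) -Jk setIidl //.
by apply: sub_big_prod; rewrite // mem_iota /= ltnSn.
Qed.

Lemma sub_socle : A `<=` socle A B.
Proof. by move=> x Ax; apply: sub_gen; left. Qed.

Lemma socle_sub : socle A B `<=` B.
Proof. by apply: gen_sub => // x [/AB //|[a [[[_ [_ aB]] _] /aB]]]. Qed.

Lemma socle_big_prod l : [set a | atom A B a] = [set` l] ->
  socle A B = \big[prod/A]_(a <- l) a.
Proof.
move=> /seteqP[atom_l l_atom]; apply/seteqP; split.
  apply: gen_sub; first exact: big_prod_subring.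
  move=> x [/sub_big_prod_idx //|[a [/atom_l al ax]]].
  exact: sub_big_prod ax.
apply: big_prod_sub => [||a /l_atom aA _ x ax]; [exact: gen_subring|exact: sub_socle|].
by apply: sub_gen; right; exists a.
Qed.

Lemma setI_socle l T : [set a | atom A B a] = [set` l] -> interm A B T ->
  T `&` socle A B = \big[prod/A]_(a <- l | `[< a `<=` T >]) a.
Proof.
move=> El iT; rewrite (socle_big_prod El) setI_big_prod //.
by move/seteqP: El => [_ l_atom] a /l_atom.
Qed.

Lemma boolean_socle : boolean A (socle A B).
Proof.
have /finite_seqP[l El] := finite_atoms.
split; first exact: distributive_subinterval socle_sub distrAB.
move=> T iT; have [_ [AT Tsoc]] := iT.
have iTB : interm A B T := interm_subinterval (@subset_refl _ A) socle_sub iT.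
pose T' := \big[prod/A]_(a <- l | ~~ `[< a `<=` T >]) a.
have T'soc : T' `<=` socle A B.
  rewrite (socle_big_prod El); apply: big_prod_sub => [||a al _].
  - exact: big_prod_subring.
  - exact: sub_big_prod_idx.
  - exact: sub_big_prod.
exists T'; split; [|split].
- by split; [exact: big_prod_subring|split; [exact: sub_big_prod_idx|]].
- rewrite setI_big_prod //; last by move/seteqP: El => [_ l_atom] a /l_atom.
  by apply: big_pred0 => a; apply: andNb.
- apply/seteqP; split; first by apply: prod_sub => //; exact: gen_subring.
  rewrite [X in X `<=` _](socle_big_prod El).
  apply: big_prod_sub => [||a al _]; first exact: prod_subring.
    by move=> x /AT; apply: subset_prodl.
  case: (asboolP (a `<=` T)) => [aT x /aT|aT x ax]; first exact: subset_prodl.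
  by apply: subset_prodr; apply: sub_big_prod ax => //; apply/asboolPn.
Qed.

Lemma FIP_socle : FIP A (socle A B).
Proof.
have /finite_seqP[l El] := finite_atoms.
pose join_mask (m : (size l).-tuple bool) := \big[prod/A]_(a <- mask m l) a.
apply: (sub_finite_set (B := join_mask @` setT)); last exact: finite_image.
move=> T iT; exists (map_tuple (fun a => `[< a `<=` T >]) (in_tuple l)) => //.
rewrite /join_mask /= -filter_mask big_filter -setI_socle //.
  by apply: setIidl; have [_ []] := iT.
exact: interm_subinterval (@subset_refl _ A) socle_sub iT.
Qed.

End Atoms.

Section Loewy.
Variable S : comPzRingType.
Variable R : set S.

Lemma loewy_subring i : subring R -> subring (loewy R i).
Proof. by case: i => [//|i] _; apply: gen_subring. Qed.

Lemma loewy_mono i j : (i <= j)%N -> loewy R i `<=` loewy R j.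
Proof. by move=> /subnK <-; elim: (j - i)%N => [|d IH] // x /IH; apply: sub_socle. Qed.

Lemma loewy_block_sub i j X Y : (i < j)%N ->
  interm (loewy R i) (loewy R i.+1) X -> interm (loewy R j) (loewy R j.+1) Y ->
  X `<=` Y.
Proof. by move=> ij [_ [_ XB]] [_ [YB _]] x /XB /(loewy_mono ij) /YB. Qed.

Lemma P_extension_distributive n : P_extension R n ->
  (forall i, (i < n)%N -> distributive (loewy R i) (loewy R i.+1)) ->
  distributive R setT.
Proof.
move=> Pext distr_blocks T U V iT iU iV.
have [[sT _] [[sU _] [sV _]]] := (iT, (iU, iV)).
have [t tn bT] := Pext T iT; have [u _ bU] := Pext U iU; have [v _ bV] := Pext V iV.
case: (ltngtP u v) bV => [uv|vu|<-] bV.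
- exact: distr_laws_chain (loewy_block_sub uv bU bV).
- by apply: distr_lawsC; exact: distr_laws_chain (loewy_block_sub vu bV bU).
case: (ltngtP t u) bU bV => [tu|ut|<-] bU bV.
- exact: distr_laws_below (loewy_block_sub tu bT bU) (loewy_block_sub tu bT bV).
- exact: distr_laws_above (loewy_block_sub ut bU bT) (loewy_block_sub ut bV bT).
- exact: distr_blocks t tn T U V bT bU bV.
Qed.

Lemma P_extension_FIP n : P_extension R n ->
  (forall i, (i < n)%N -> FIP (loewy R i) (loewy R i.+1)) -> FIP R setT.
Proof.
move=> Pext fip_blocks.
pose blocks := \bigcup_(i in `I_n) Defs.interval (loewy R i) (loewy R i.+1).
apply: (sub_finite_set (B := blocks)).
  by move=> T /Pext[i ilt bT]; exists i.
by apply: bigcup_finite => [|i]; [exact: finite_II|exact: fip_blocks].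
Qed.

End Loewy.

Theorem theorem8p5 (S : comPzRingType) (R : set S) (n : nat) :
  subring R -> FCP R setT -> loewy_length R n -> P_extension R n ->
  (distributive R setT <-> (forall i, (i < n)%N -> boolean (loewy R i) (loewy R i.+1)))
  /\ (distributive R setT -> FIP R setT).
Proof.
move=> sR fcpR _ Pext.
have block_props i : distributive R setT ->
    boolean (loewy R i) (loewy R i.+1) /\ FIP (loewy R i) (loewy R i.+1).
  move=> distrR; have sub_R : R `<=` loewy R i := loewy_mono (leq0n i).
  have distr_i := distributive_subinterval sub_R (@subset_refl _ setT) distrR.
  have fcp_i := FCP_subinterval sub_R (@subset_refl _ setT) fcpR.
  have s_i := loewy_subring i sR; have sT := @subringT S.
  by split; [apply: boolean_socle|apply: FIP_socle].
split; [split|] => [distrR i _|bool_blocks|distrR].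
- exact: (block_props i distrR).1.
- by apply: P_extension_distributive Pext _ => i /bool_blocks[].
- by apply: P_extension_FIP Pext _ => i _; exact: (block_props i distrR).2.
Qed.
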